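(* Let $N\geq 2$ be an integer and consider $2N+1$ qubits $a_1,\dots,a_{2N+1}$. Define the $(2N+1)$-qubit graph state $$|h_{2N+1}\rangle = CZ_{(1,2)}\,CZ_{(1,N+2)}\prod_{k=3}^{N+1}\Big[CZ_{(2,k)}\,CZ_{(k,N+2)}\,CZ_{(k,k+N)}\Big]\,|+\rangle^{\otimes(2N+1)},$$ equivalently $$|h_{2N+1}\rangle=\frac{1}{2^N\sqrt{2}}\sum_{q_1,\dots,q_{2N+1}\in\{0,1\}}(-1)^{f(q_1,\dots,q_{2N+1})}|q_1,q_2,\dots,q_{2N+1}\rangle,$$ where $f(q)=q_1q_2\oplus q_1q_{N+2}\oplus\bigoplus_{k=3}^{N+1}\big(q_2q_k\oplus q_kq_{N+2}\oplus q_kq_{k+N}\big)$ (with $\oplus$ addition mod 2). Then the geometric measure of entanglement of $|h_{2N+1}\rangle$ equals $N$, i.e. $G(|h_{2N+1}\rangle\langle h_{2N+1}|)=N$.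
   Context: $|+\rangle=(|0\rangle+|1\rangle)/\sqrt2$. $CZ_{(j_1,j_2)}$ denotes the two-qubit controlled-$Z$ gate $\mathrm{diag}(1,1,1,-1)$ acting on qubits $a_{j_1},a_{j_2}$ (identity elsewhere). For a pure state $\rho$ on $(\mathbb{C}^2)^{\otimes(2N+1)}$, $\Lambda^2(\rho)=\max_{|\varphi\rangle}\langle\varphi|\rho|\varphi\rangle$, where the maximum is over fully product pure states $|\varphi\rangle=|\varphi_1\rangle\otimes\cdots\otimes|\varphi_{2N+1}\rangle$, and the geometric measure of entanglement is $G(\rho)=-2\log_2\Lambda(\rho)$. *)

From mathcomp Require Import all_boot all_algebra.
From mathcomp Require Import classical_sets reals exp complex.
Set Implicit Arguments. Unset Strict Implicit. Unset Printing Implicit Defensive.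
Import GRing.Theory Num.Theory.
Local Open Scope ring_scope.

Section QState.
Variable R : realType.

Definition basis (n : nat) := {ffun 'I_n -> bool}.

Definition qvec (n : nat) := basis n -> R[i].
Definition qop (n : nat) := basis n -> basis n -> R[i].

Definition proj (n : nat) (psi : qvec n) : qop n :=
  fun q q' => psi q * (psi q')^*.

Definition qubit_state (ab : R[i] * R[i]) : Prop :=
  `|ab.1| ^+ 2 + `|ab.2| ^+ 2 = 1.

Definition prod_vec (n : nat) (phi : 'I_n -> R[i] * R[i]) : qvec n :=
  fun q => \prod_(i < n) (if q i then (phi i).2 else (phi i).1).

Definition expect (n : nat) (rho : qop n) (phi : qvec n) : R[i] :=
  \sum_(q : basis n) \sum_(q' : basis n) (phi q)^* * rho q q' * phi q'.

(* Lambda^2(rho) = max over fully product pure states of <phi|rho|phi>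
   (the maximum is attained by compactness, so it is the supremum; the
   value <phi|rho|phi> is real for rho = |psi><psi|, we take its real part) *)
Definition Lambda2 (n : nat) (rho : qop n) : R :=
  sup [set x : R | exists phi : 'I_n -> R[i] * R[i],
         (forall i, qubit_state (phi i)) /\ x = complex.Re (expect rho (prod_vec phi))].

Definition log2 (x : R) : R := ln x / ln 2.

Definition GME (n : nat) (rho : qop n) : R :=
  - 2 * log2 (Num.sqrt (Lambda2 rho)).

(* 1-based qubit labels: qubit a_j is index j-1 of 'I_(2N+1) *)
Definition qb (N : nat) (q : basis (N.*2).+1) (j : nat) : bool :=
  q (inord j.-1).

Definition f_h (N : nat) (q : basis (N.*2).+1) : bool :=
  (qb q 1 && qb q 2) (+) (qb q 1 && qb q N.+2) (+)
  \big[addb/false]_(3 <= k < N.+2)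
     ((qb q 2 && qb q k) (+) (qb q k && qb q N.+2) (+) (qb q k && qb q (k + N))).

Definition h_state (N : nat) : qvec (N.*2).+1 :=
  fun q => Complex ((2 ^+ N * Num.sqrt (2 : R))^-1) 0 * (-1) ^+ (f_h q : nat).

End QState.

From mathcomp Require Import all_boot all_algebra.
From mathcomp Require Import classical_sets reals exp complex.
From mathcomp Require Import zify ring lra.
Import order.Order.TTheory GRing.Theory Num.Theory.
Local Open Scope ring_scope.

(* Write a product state through the weights w_k(b) = conj <b|phi_k>.  Then
   <phi|h> is (2^N sqrt 2)^-1 times the signed sum of prod_k w_k(q_k) (-1)^f(q).
   Once the hubs a_1, a_2, a_(N+2) are fixed, the phase factorises over the
   N - 1 pairs (a_k, a_(k+N)) and sees the hubs a_2, a_(N+2) only through the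
   sign s = (-1)^(q_2 + q_(N+2)).  Summing out a pair gives a factor of squared
   modulus at most 2 (Cauchy-Schwarz and the parallelogram law), and summing out
   a_1 gives w_1(0) + s w_1(1).  Cauchy-Schwarz over the two values of s then
   bounds |<phi|h>|^2 by 2^-(2N+1) * 4 * 2^(N-1) = 2^-N, with equality for |0>
   on a_1, a_3, ..., a_(N+1) and |+> elsewhere.  So Lambda^2 = 2^-N, G = N. *)

Section SquaredModulus.
Context {R : realType}.
Implicit Types (a b c d z : R[i]) (x : R).

Definition normsq z : R := complex.Re z ^+ 2 + complex.Im z ^+ 2.

Lemma normsq_ge0 z : 0 <= normsq z.
Proof. by rewrite addr_ge0 // sqr_ge0. Qed.

Lemma normsqM a b : normsq (a * b) = normsq a * normsq b.
Proof. by case: a b => [a1 a2] [b1 b2]; rewrite /normsq /=; ring. Qed.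

Lemma normsq1 : normsq 1 = 1.
Proof. by rewrite /normsq /=; ring. Qed.

Lemma normsqN z : normsq (- z) = normsq z.
Proof. by case: z => z1 z2; rewrite /normsq /=; ring. Qed.

Lemma normsqJ z : normsq z^* = normsq z.
Proof. by case: z => z1 z2; rewrite /normsq /=; ring. Qed.

Lemma normsq_real x : normsq x%:C%C = x ^+ 2.
Proof. by rewrite /normsq /= expr0n addr0. Qed.

Lemma normsq_prod (I : finType) (F : I -> R[i]) :
  normsq (\prod_i F i) = \prod_i normsq (F i).
Proof. exact: (big_morph normsq normsqM normsq1). Qed.

Lemma normsqX z k : normsq (z ^+ k) = normsq z ^+ k.
Proof. by elim: k => [|k IH]; rewrite ?normsq1 // !exprS normsqM IH. Qed.

Lemma Re_mul_conj z : complex.Re (z * z^*) = normsq z.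
Proof. by case: z => z1 z2; rewrite /normsq /=; ring. Qed.

Lemma normsq_parallelogram a b :
  normsq (a + b) + normsq (a - b) = 2 * (normsq a + normsq b).
Proof. by case: a b => [a1 a2] [b1 b2]; rewrite /normsq /=; ring. Qed.

Lemma normsq_dot_le a b c d :
  normsq (a * c + b * d) <= (normsq a + normsq b) * (normsq c + normsq d).
Proof.
rewrite -subr_ge0.
have -> : (normsq a + normsq b) * (normsq c + normsq d) - normsq (a * c + b * d)
          = normsq (a * d^* - b * c^*).
  by case: a b c d => [a1 a2] [b1 b2] [c1 c2] [d1 d2]; rewrite /normsq /=; ring.
exact: normsq_ge0.
Qed.

Lemma qubit_state_normsq ab : qubit_state ab -> normsq ab.1 + normsq ab.2 = 1.
Proof.
by rewrite /qubit_state -!add_Re2_Im2 -rmorphD => /(congr1 (@complex.Re R)).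
Qed.

End SquaredModulus.

Section Overlap.
Context {R : realType} {n : nat}.

Definition overlap (phi psi : qvec R n) : R[i] := \sum_q (phi q)^* * psi q.

Lemma Re_expect_proj (psi phi : qvec R n) :
  complex.Re (expect (proj psi) phi) = normsq (overlap phi psi).
Proof.
rewrite -Re_mul_conj /overlap rmorph_sum mulr_suml; congr complex.Re.
apply: eq_bigr => q _; rewrite mulr_sumr; apply: eq_bigr => q' _.
by rewrite /proj rmorphM /= conjCK; ring.
Qed.

End Overlap.

Lemma big_nat_offset (T : Type) (idx : T) (op : T -> T -> T) a b (F : nat -> T) :
  \big[op/idx]_(a <= k < a + b) F k = \big[op/idx]_(j < b) F (j + a)%N.
Proof. by rewrite -{1}[a]add0n big_addn addKn big_mkord. Qed.

Lemma sum_pairE (V : nmodType) (I J : finType) (F : I * J -> V) :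
  \sum_p F p = \sum_i \sum_j F (i, j).
Proof. by rewrite pair_bigA; apply: eq_bigr => -[]. Qed.

Section HubsAndPairs.
Variable M : nat.
Local Notation n := ((M.+1).*2).+1.
Local Notation pairs := {ffun 'I_M -> bool * bool}.

Definition pair_at (uv : pairs) (k : nat) : bool * bool :=
  odflt (false, false) (omap uv (insub k)).

Lemma pair_at_ord uv (j : 'I_M) : pair_at uv j = uv j.
Proof. by rewrite /pair_at valK. Qed.

(* With N = M + 1, the hubs a_1, a_2, a_(N+2) sit at positions 0, 1, M + 2 and
   the pair (a_(j+3), a_(j+3+N)) at positions j + 2 and j + M + 3. *)
Definition config_at (x : bool * bool * bool) (uv : pairs) (k : nat) : bool :=
  if k == 0%N then x.1.1 else if k == 1%N then x.1.2
  else if (k < M.+2)%N then (pair_at uv (k - 2)).1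
  else if k == M.+2 then x.2 else (pair_at uv (k - M.+3)).2.

Definition config x uv : basis n := [ffun i : 'I_n => config_at x uv i].

Lemma config_at_pair1 x uv (j : 'I_M) : config_at x uv (j + 2) = (uv j).1.
Proof.
rewrite /config_at addnK pair_at_ord; have hj := ltn_ord j.
by do 2 (case: eqP => [?|_]; first lia); rewrite ifT //; lia.
Qed.

Lemma config_at_pair2 x uv (j : 'I_M) : config_at x uv (j + M.+3) = (uv j).2.
Proof.
rewrite /config_at addnK pair_at_ord; have hj := ltn_ord j.
by do 2 (case: eqP => [?|_]; first lia); rewrite ifF ?ifF //; lia.
Qed.

Lemma config_inord x uv k : (k < n)%N -> config x uv (inord k) = config_at x uv k.
Proof. by move=> hk; rewrite ffunE inordK. Qed.

Lemma config_inj x uv y uv' : config x uv = config y uv' -> (x, uv) = (y, uv').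
Proof.
move=> E; have Ek k : (k < n)%N -> config_at x uv k = config_at y uv' k.
  by move=> hk; rewrite -!config_inord ?E.
have -> : uv = uv'.
  apply/ffunP => j; have hj := ltn_ord j.
  have e1 : (uv j).1 = (uv' j).1 by rewrite -(config_at_pair1 x) -(config_at_pair1 y) Ek //; lia.
  have e2 : (uv j).2 = (uv' j).2 by rewrite -(config_at_pair2 x) -(config_at_pair2 y) Ek //; lia.
  by case: (uv j) (uv' j) e1 e2 => [? ?] [? ?] /= -> ->.
case: x y E Ek => [[x1 x2] x3] [[y1 y2] y3] _ Ek.
have := Ek M.+2; have := Ek 1%N; have := Ek 0%N.
by rewrite /config_at /= ltnn eqxx => -> // -> // -> //; lia.
Qed.

Lemma config_bij : bijective (fun p => config p.1 p.2).
Proof.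
apply: inj_card_bij => [[x uv] [y uv'] /config_inj //|].
rewrite !card_prod !card_ffun !card_prod !card_bool !card_ord.
by rewrite expnMn expnS -addnn expnD !expnS; lia.
Qed.

Lemma sum_basis_config (V : nmodType) (F : basis n -> V) :
  \sum_q F q = \sum_x \sum_(uv : pairs) F (config x uv).
Proof.
by rewrite (reindex (fun p => config p.1 p.2)) ?pair_bigA //; exact: onW_bij config_bij.
Qed.

Lemma qb_config x uv k : (k <= n)%N -> qb (config x uv) k = config_at x uv k.-1.
Proof. by move=> hk; rewrite /qb config_inord //; lia. Qed.

Lemma qb_config_pair1 x uv (j : 'I_M) : qb (config x uv) (j + 3) = (uv j).1.
Proof.
have hj := ltn_ord j.
by rewrite qb_config -?(config_at_pair1 x uv); [congr config_at; lia | lia].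
Qed.

Lemma qb_config_pair2 x uv (j : 'I_M) : qb (config x uv) (j + 3 + M.+1) = (uv j).2.
Proof.
have hj := ltn_ord j.
by rewrite qb_config -?(config_at_pair2 x uv); [congr config_at; lia | lia].
Qed.

Lemma f_h_config x uv :
  f_h (config x uv) =
  (x.1.1 && x.1.2) (+) (x.1.1 && x.2) (+)
  \big[addb/false]_(j < M)
     ((x.1.2 && (uv j).1) (+) ((uv j).1 && x.2) (+) ((uv j).1 && (uv j).2)).
Proof.
rewrite /f_h !qb_config //; last lia.
rewrite /config_at /= ltnn eqxx (_ : M.+3 = 3 + M)%N // big_nat_offset.
by congr (_ (+) _); apply: eq_bigr => j _; rewrite qb_config_pair1 qb_config_pair2.
Qed.

Lemma prod_config (C : comPzSemiRingType) (w : nat -> bool -> C) x uv :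
  \prod_(i < n) w i (config x uv i) =
  w 0%N x.1.1 * w 1%N x.1.2 * w M.+2 x.2 *
  \prod_(j < M) (w (j + 2)%N (uv j).1 * w (j + M.+3)%N (uv j).2).
Proof.
under eq_bigr do rewrite ffunE.
rewrite -(big_mkord xpredT (fun k => w k (config_at x uv k))) big_ltn // big_ltn; last lia.
rewrite (big_cat_nat _ (n := M.+2)) //=; last lia.
rewrite (@big_ltn _ _ _ M.+2); last lia.
rewrite (_ : M.+2 = 2 + M)%N // big_nat_offset (_ : n = M.+3 + M)%N; last lia.
rewrite big_nat_offset !add2n.
rewrite (eq_bigr _ (fun (j : 'I_M) _ => congr1 (w (j + 2)%N) (config_at_pair1 x uv j))).
rewrite (eq_bigr _ (fun (j : 'I_M) _ => congr1 (w (j + M.+3)%N) (config_at_pair2 x uv j))).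
by rewrite big_split /config_at /= ltnn eqxx; ring.
Qed.

End HubsAndPairs.
Arguments config {M}.

Section Amplitude.
Variables (C : comNzRingType) (M : nat) (w : nat -> bool -> C).
Local Notation n := ((M.+1).*2).+1.

Definition bsum (a : bool -> C) (s : C) : C := a false + s * a true.

Definition pair_factor (j : nat) (s : C) : C :=
  bsum (fun u => w (j + 2)%N u * bsum (w (j + M.+3)%N) ((-1) ^+ u)) s.

Definition branch (s : C) : C := bsum (w 0%N) s * \prod_(j < M) pair_factor j s.

Lemma sum_pair_term a b j :
  \sum_(p : bool * bool) w (j + 2)%N p.1 * w (j + M.+3)%N p.2 *
     (-1) ^+ ((a && p.1) (+) (p.1 && b) (+) (p.1 && p.2))
  = pair_factor j ((-1) ^+ (a (+) b)).
Proof.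
rewrite sum_pairE !big_bool /pair_factor /bsum /=.
by case: a; case: b => /=; ring.
Qed.

Lemma sum_hub_pairs x :
  \sum_(uv : {ffun 'I_M -> bool * bool})
     (\prod_(i < n) w i (config x uv i)) * (-1) ^+ f_h (config x uv)
  = w 0%N x.1.1 * w 1%N x.1.2 * w M.+2 x.2 * (-1) ^+ ((x.1.1 && x.1.2) (+) (x.1.1 && x.2))
    * \prod_(j < M) pair_factor j ((-1) ^+ (x.1.2 (+) x.2)).
Proof.
rewrite -(eq_bigr _ (fun (j : 'I_M) _ => sum_pair_term _ _ j)) bigA_distr_bigA mulr_sumr.
apply: eq_bigr => uv _; rewrite prod_config f_h_config signr_addb.
rewrite (big_morph (fun b : bool => (-1 : C) ^+ b) (@signr_addb C)
                  (erefl : (-1 : C) ^+ false = 1)).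
by rewrite [in RHS]big_split /=; ring.
Qed.

Definition hstate_amplitude : C :=
  (w 1%N false * w M.+2 false + w 1%N true * w M.+2 true) * branch 1 +
  (w 1%N false * w M.+2 true + w 1%N true * w M.+2 false) * branch (-1).

Lemma sum_signed_prod_hstate :
  \sum_(q : basis n) (\prod_(i < n) w i (q i)) * (-1) ^+ f_h q = hstate_amplitude.
Proof.
rewrite sum_basis_config (eq_bigr _ (fun x _ => sum_hub_pairs x)) !sum_pairE.
by rewrite !big_bool /hstate_amplitude /branch /bsum /=; ring.
Qed.

End Amplitude.
Arguments bsum {C}.
Arguments pair_factor {C} M w j s.
Arguments branch {C} M w s.
Arguments hstate_amplitude {C} M w.

Section Bounds.
Variables (R : realType) (M : nat) (w : nat -> bool -> R[i]).
Local Notation n := ((M.+1).*2).+1.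

Lemma normsq_bsum_pm (a : bool -> R[i]) :
  normsq (bsum a 1) + normsq (bsum a (-1)) = 2 * (normsq (a false) + normsq (a true)).
Proof. by rewrite /bsum mul1r mulN1r normsq_parallelogram. Qed.

Hypothesis w_normalized :
  forall k, (k < n)%N -> normsq (w k false) + normsq (w k true) = 1.

Lemma normsq_pair_factor_le (j : 'I_M) s :
  normsq s = 1 -> normsq (pair_factor M w j s) <= 2.
Proof.
move=> hs; have hj := ltn_ord j.
rewrite /pair_factor {1}/bsum mulrCA expr0 expr1.
apply: (le_trans (normsq_dot_le _ _ _ _)).
by rewrite normsqM hs mul1r normsq_bsum_pm !w_normalized ?mul1r ?mulr1 //; lia.
Qed.

Lemma normsq_branch_le s :
  normsq s = 1 -> normsq (branch M w s) <= normsq (bsum (w 0%N) s) * 2 ^+ M.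
Proof.
move=> hs; rewrite /branch normsqM normsq_prod.
apply: ler_wpM2l; first exact: normsq_ge0.
rewrite -[in X in _ <= X](card_ord M) -prodr_const.
by apply: ler_prod => j _; rewrite normsq_ge0 normsq_pair_factor_le.
Qed.

Lemma normsq_hstate_amplitude_le : normsq (hstate_amplitude M w) <= 2 ^+ M.+2.
Proof.
have h1 : (1 < n)%N by lia.
have h2 : (M.+2 < n)%N by lia.
have hP1 := normsq_dot_le (w 1%N false) (w 1%N true) (w M.+2 false) (w M.+2 true).
have hP2 := normsq_dot_le (w 1%N false) (w 1%N true) (w M.+2 true) (w M.+2 false).
rewrite !w_normalized // mulr1 in hP1.
rewrite w_normalized // [_ + normsq (w M.+2 false)]addrC w_normalized // mulr1 in hP2.
have hB1 := normsq_branch_le 1 normsq1.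
have hB2 := normsq_branch_le (-1) (etrans (normsqN 1) normsq1).
have hD := normsq_bsum_pm (w 0%N); rewrite w_normalized // mulr1 in hD.
apply: (le_trans (normsq_dot_le _ _ _ _)).
rewrite !exprS; apply: ler_pM; try exact: addr_ge0 (normsq_ge0 _) (normsq_ge0 _).
  by lra.
by rewrite -[X in X * _]hD mulrDl; exact: lerD.
Qed.

End Bounds.

Lemma sup_attained (R : realType) (E : set R) x : E x -> ubound E x -> sup E = x.
Proof.
move=> Ex ubx; apply/le_anti/andP; split; first exact: ge_sup (ex_intro _ x Ex) ubx.
exact: ub_le_sup (ex_intro _ x ubx) _ Ex.
Qed.

Section HState.
Variables (R : realType) (M : nat).
Local Notation N := M.+1.
Local Notation n := ((M.+1).*2).+1.

Definition bra (phi : 'I_n -> R[i] * R[i]) (k : nat) (b : bool) : R[i] :=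
  (if b then (phi (inord k)).2 else (phi (inord k)).1)^*.

Lemma overlap_prod_vec_hstate phi :
  overlap (prod_vec phi) (@h_state R N) =
  ((2 ^+ N * Num.sqrt 2)^-1)%:C%C * hstate_amplitude M (bra phi).
Proof.
rewrite -sum_signed_prod_hstate /overlap mulr_sumr; apply: eq_bigr => q _.
rewrite /prod_vec rmorph_prod mulrCA; congr (_ * (_ * _)).
by apply: eq_bigr => i _; rewrite /bra inord_val; case: (q i).
Qed.

Lemma hstate_scale : ((2 ^+ N * Num.sqrt 2)^-1) ^+ 2 * 2 ^+ M.+2 = (2 ^+ N)^-1 :> R.
Proof.
have : (2 ^+ M : R) != 0 by rewrite expf_neq0 // pnatr_eq0.
by rewrite exprVn exprMn sqr_sqrtr ?ler0n // !exprS expr0 => ?; field.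
Qed.

Lemma bra_normalized phi : (forall i, qubit_state (phi i)) ->
  forall k, normsq (bra phi k false) + normsq (bra phi k true) = 1.
Proof. by move=> hphi k; rewrite /bra !normsqJ qubit_state_normsq. Qed.

Lemma normsq_overlap_hstate_le phi : (forall i, qubit_state (phi i)) ->
  normsq (overlap (prod_vec phi) (@h_state R N)) <= (2 ^+ N)^-1.
Proof.
move=> hphi; rewrite overlap_prod_vec_hstate normsqM normsq_real -hstate_scale.
apply: ler_wpM2l; first exact: sqr_ge0.
by apply: normsq_hstate_amplitude_le => k _; exact: bra_normalized.
Qed.

Let isq2 : R[i] := ((Num.sqrt 2)^-1)%:C%C.

(* Positions of a_1 and of the inner qubits a_3, ..., a_(N+1); the witness
   puts these in [|0>] and all other qubits in [|+>]. *)
Definition ket0_position (k : nat) : bool := (k == 0%N) || (2 <= k < M.+2)%N.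

Definition witness (i : 'I_n) : R[i] * R[i] := if ket0_position i then (1, 0) else (isq2, isq2).

Lemma normsq_isq2_double : normsq (isq2 + isq2) = 2.
Proof.
have hc : ((Num.sqrt 2)^-1 : R) ^+ 2 = 2^-1 by rewrite exprVn sqr_sqrtr ?ler0n.
rewrite /normsq /=; lra.
Qed.

Lemma witness_qubit_state i : qubit_state (witness i).
Proof.
rewrite /qubit_state /witness; case: ifP => _ /=; first by rewrite normr1 normr0; ring.
rewrite -add_Re2_Im2 /= expr0n addr0 exprVn sqr_sqrtr ?ler0n //.
by rewrite -rmorphD /= (_ : _ + _ = 1) //; field.
Qed.

Lemma conj_isq2 : isq2^* = isq2.
Proof. exact: conjc_real. Qed.

Lemma bra_witness_ket0 k b : (k < n)%N -> ket0_position k ->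
  bra witness k b = if b then 0 else 1.
Proof.
move=> hk hk0; rewrite /bra /witness inordK // hk0.
by case: b; rewrite ?conjC0 ?conjC1.
Qed.

Lemma bra_witness_plus k b : (k < n)%N -> ~~ ket0_position k -> bra witness k b = isq2.
Proof.
move=> hk hk0; rewrite /bra /witness inordK // (negbTE hk0).
by case: b; exact: conj_isq2.
Qed.

Lemma hstate_amplitude_witness : hstate_amplitude M (bra witness) = (isq2 + isq2) ^+ M.+2.
Proof.
have pair_w j s : (j < M)%N -> pair_factor M (bra witness) j s = isq2 + isq2.
  move=> hj; have [hu hv] : (j + 2 < n)%N /\ (j + M.+3 < n)%N by lia.
  have hu0 : ket0_position (j + 2) by rewrite /ket0_position; lia.
  have hv0 : ~~ ket0_position (j + M.+3) by rewrite /ket0_position; lia.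
  rewrite /pair_factor /bsum !(bra_witness_ket0 (j + 2)) // !(bra_witness_plus (j + M.+3)) //.
  by rewrite /= expr0; ring.
have [h1 h2] : (1 < n)%N /\ (M.+2 < n)%N by lia.
have hM : ~~ ket0_position M.+2 by rewrite /ket0_position ltnn andbF.
have prod_w s : \prod_(j < M) pair_factor M (bra witness) j s = (isq2 + isq2) ^+ M.
  by rewrite (eq_bigr _ (fun (j : 'I_M) _ => pair_w j s (ltn_ord j))) prodr_const card_ord.
rewrite /hstate_amplitude /branch /bsum !prod_w !(bra_witness_ket0 0) // !(bra_witness_plus 1) //.
rewrite !(bra_witness_plus M.+2) //.
by rewrite !exprS; ring.
Qed.

Lemma Lambda2_hstate : Lambda2 (proj (@h_state R N)) = (2 ^+ N)^-1.
Proof.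
apply: sup_attained.
  exists witness; split; first exact: witness_qubit_state.
  rewrite Re_expect_proj overlap_prod_vec_hstate normsqM normsq_real.
  by rewrite hstate_amplitude_witness normsqX normsq_isq2_double hstate_scale.
by move=> _ [phi [hphi ->]]; rewrite Re_expect_proj; exact: normsq_overlap_hstate_le.
Qed.

End HState.

Lemma ln_sqrt (R : realType) (x : R) : 0 < x -> ln (Num.sqrt x) = ln x / 2.
Proof.
move=> x_gt0; rewrite -{2}(sqr_sqrtr (ltW x_gt0)) lnXn ?sqrtr_gt0 //.
by rewrite -mulr_natr; field.
Qed.

Theorem proposition1 (R : realType) (N : nat) :
  (2 <= N)%N -> GME (proj (@h_state R N)) = N%:R.
Proof.
case: N => [//|M] _.
have ln2_gt0 : 0 < ln (2 : R) by rewrite ln_gt0 // ltr1n.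
rewrite /GME Lambda2_hstate /log2 ln_sqrt ?invr_gt0 ?exprn_gt0 //.
rewrite lnV ?posrE ?exprn_gt0 // lnXn // -[_ *+ M.+1]mulr_natr.
by field; rewrite gt_eqF.
Qed.
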